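(* Let $\varphi$ be a GFG-QPTL formula and $\mathcal X_1,\mathcal X_2\in\mathrm{HAsg}_\supseteq(\mathrm{free}(\varphi))$ with $\mathcal X_1\sqsubseteq\mathcal X_2$. Then $\mathcal X_1\models^{\exists\forall}\varphi$ implies $\mathcal X_2\models^{\exists\forall}\varphi$, and $\mathcal X_2\models^{\forall\exists}\varphi$ implies $\mathcal X_1\models^{\forall\exists}\varphi$.
   Context: Let $AP$ be a set of atomic propositions and $\mathbb B=\{\top,\bot\}$. A temporal valuation is a function $f:\mathbb N\to\mathbb B$. An assignment is a partial function $\chi:AP\rightharpoonup(\mathbb N\to\mathbb B)$; $\mathrm{Asg}$ is the set of all assignments, $\mathrm{Asg}(P)$ the set of assignments with domain exactly $P\subseteq AP$. For an assignment $\chi$, $p\in AP$ and a temporal valuation $f$, $\chi[p\mapsto f]$ is the assignment that agrees with $\chi$ except that it maps $p$ to $f$. A hyperassignment is a set $\mathcal X$ with $\emptyset\neq\mathcal X\subseteq 2^{\mathrm{Asg}(P)}$ and $\emptyset\notin\mathcal X$, for some $P\subseteq AP$; this $P$ is denoted $\mathrm{ap}(\mathcal X)$. $\mathrm{HAsg}$ is the set of all hyperassignments, $\mathrm{HAsg}(P)$ those with $\mathrm{ap}(\mathcal X)=P$, and $\mathrm{HAsg}_\supseteq(P)$ those with $\mathrm{ap}(\mathcal X)\supseteq P$. For $\mathcal X_1,\mathcal X_2\in\mathrm{HAsg}$, $\mathcal X_1\sqsubseteq\mathcal X_2$ iff for every $X_1\in\mathcal X_1$ there is $X_2\in\mathcal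 X_2$ with $X_2\subseteq X_1$. A choice function for $\mathcal X$ is a map $c:\mathcal X\to\mathrm{Asg}$ with $c(X)\in X$ for all $X\in\mathcal X$. The dual of $\mathcal X$ is $\overline{\mathcal X}=\{\mathrm{img}(c): c\text{ a choice function for }\mathcal X\}$. $\mathrm{par}(\mathcal X)$ is the set of pairs $(\mathcal X_1,\mathcal X_2)$ of (possibly empty) subsets of $\mathcal X$ with $\mathcal X_1\cap\mathcal X_2=\emptyset$ and $\mathcal X_1\cup\mathcal X_2=\mathcal X$. A functor over $P\subseteq AP$ is a function $F:\mathrm{Asg}(P)\to(\mathbb N\to\mathbb B)$; $\mathrm{Fnc}(P)$ is the set of all of them. $\mathrm{ext}(\chi,F,p)=\chi[p\mapsto F(\chi)]$ and $\mathrm{ext}(X,F,p)=\{\mathrm{ext}(\chi,F,p):\chi\in X\}$. For $\chi_1,\chi_2\in\mathrm{Asg}(P)$, $p\in P$, $k\in\mathbb N$: $\chi_1\approx^{>k}_p\chi_2$ iff $\chi_1(q)=\chi_2(q)$ for all $q\in P\setminus\{p\}$ and $\chi_1(p)(t)=\chi_2(p)(t)$ for all $t\le k$; $\chi_1\approx^{\ge k}_p\chi_2$ is defined the same way with $t<k$ in place of $t\le k$. $F\in\mathrm{Fnc}(P)$ is behavioral (resp. strongly behavioral) w.r.t. $p\in P$ if $F(\chi_1)(k)=F(\chi_2)(k)$ for all $k\in\mathbb N$ and all $\chi_1,\chi_2$ with $\chi_1\approx^{>k}_p\chi_2$ (resp. $\chi_1\approx^{\ge k}_p\chi_2$). A quantifier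 specification is a pair $\sigma=\langle P_B,P_S\rangle$ of subsets of $AP$; $\mathrm{Fnc}_\sigma(P)$ is the set of $F\in\mathrm{Fnc}(P)$ that are behavioral w.r.t. every $p\in P_B\cap P$ and strongly behavioral w.r.t. every $p\in P_S\cap P$. $\mathrm{ext}_\sigma(\mathcal X,p)=\{\mathrm{ext}(X,F,p):X\in\mathcal X,\ F\in\mathrm{Fnc}_\sigma(\mathrm{ap}(\mathcal X))\}$. GFG-QPTL formulas are generated by $\varphi::=\psi\mid\neg\varphi\mid\varphi\wedge\varphi\mid\varphi\vee\varphi\mid\exists p{:}\sigma.\varphi\mid\forall p{:}\sigma.\varphi$, where $\psi$ is an LTL formula over $AP$, $p\in AP$ and $\sigma$ a quantifier specification; we also write $\exists^\sigma p.\varphi$, $\forall^\sigma p.\varphi$. QPTL formulas are those in which every specification is $\langle\emptyset,\emptyset\rangle$. $\mathrm{free}(\varphi)$ is the set of free propositions. $\chi\models_{LTL}\psi$ iff the infinite word whose $t$-th letter is the valuation $q\mapsto\chi(q)(t)$ satisfies $\psi$ in the standard LTL sense. Alternation flags are $\exists\forall$ and $\forall\exists$; $\bar\alpha$ is the flag different from $\alpha$. For a GFG-QPTL formula $\varphi$, $\mathcal X\in\mathrm{HAsg}_\supseteq(\mathrm{free}(\varphi))$ and flag $\alpha$, $\mathcal X\models^\alpha\varphi$ is defined inductively: (1) for LTL $\psi$: $\mathcal X\models^{\exists\forall}\psi$ iff there is $X\in\mathcal X$ with $\chi\models_{LTL}\psi$ for all $\chi\in X$; $\mathcal X\models^{\forall\exists}\psi$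 iff for every $X\in\mathcal X$ there is $\chi\in X$ with $\chi\models_{LTL}\psi$; (2) $\mathcal X\models^\alpha\neg\phi$ iff not $\mathcal X\models^{\bar\alpha}\phi$; (3) $\mathcal X\models^{\exists\forall}\phi_1\wedge\phi_2$ iff for every $(\mathcal X_1,\mathcal X_2)\in\mathrm{par}(\mathcal X)$, either ($\mathcal X_1\ne\emptyset$ and $\mathcal X_1\models^{\exists\forall}\phi_1$) or ($\mathcal X_2\ne\emptyset$ and $\mathcal X_2\models^{\exists\forall}\phi_2$); $\mathcal X\models^{\forall\exists}\phi_1\wedge\phi_2$ iff $\overline{\mathcal X}\models^{\exists\forall}\phi_1\wedge\phi_2$; (4) $\mathcal X\models^{\forall\exists}\phi_1\vee\phi_2$ iff there is $(\mathcal X_1,\mathcal X_2)\in\mathrm{par}(\mathcal X)$ such that ($\mathcal X_1\neq\emptyset$ implies $\mathcal X_1\models^{\forall\exists}\phi_1$) and ($\mathcal X_2\neq\emptyset$ implies $\mathcal X_2\models^{\forall\exists}\phi_2$); $\mathcal X\models^{\exists\forall}\phi_1\vee\phi_2$ iff $\overline{\mathcal X}\models^{\forall\exists}\phi_1\vee\phi_2$; (5) $\mathcal X\models^{\exists\forall}\exists p{:}\sigma.\phi$ iff $\mathrm{ext}_\sigma(\mathcal X,p)\models^{\exists\forall}\phi$; $\mathcal X\models^{\forall\exists}\exists p{:}\sigma.\phi$ iff $\overline{\mathcal X}\models^{\exists\forall}\exists p{:}\sigma.\phi$; (6) $\mathcal X\models^{\forall\exists}\forall p{:}\sigma.\phi$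 iff $\mathrm{ext}_\sigma(\mathcal X,p)\models^{\forall\exists}\phi$; $\mathcal X\models^{\exists\forall}\forall p{:}\sigma.\phi$ iff $\overline{\mathcal X}\models^{\forall\exists}\forall p{:}\sigma.\phi$. *)

From Stdlib Require Import Classical ClassicalEpsilon FunctionalExtensionality PropExtensionality.

Set Implicit Arguments.

Section GFG.
Variable AP : Type.

Definition tval := nat -> bool.

Definition Asg := AP -> option tval.

Definition inAsg (P : AP -> Prop) (chi : Asg) : Prop :=
  forall q, chi q <> None <-> P q.

(* value chi(q)(t); only used when q in dom chi *)
Definition val (chi : Asg) (q : AP) (t : nat) : bool :=
  match chi q with Some f => f t | None => false end.

Definition upd (chi : Asg) (p : AP) (f : tval) : Asg :=
  fun q => if excluded_middle_informative (q = p) then Some f else chi q.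

Definition isHAsg (P : AP -> Prop) (HX : (Asg -> Prop) -> Prop) : Prop :=
  (exists X, HX X) /\
  (forall X, HX X -> exists chi, X chi) /\
  (forall X chi, HX X -> X chi -> inAsg P chi).

Definition isHAsg_sup (P : AP -> Prop) (HX : (Asg -> Prop) -> Prop) : Prop :=
  exists P', isHAsg P' HX /\ (forall q, P q -> P' q).

Definition hrefine (HX1 HX2 : (Asg -> Prop) -> Prop) : Prop :=
  forall X1, HX1 X1 -> exists X2, HX2 X2 /\ (forall chi, X2 chi -> X1 chi).

Definition choice_fun (HX : (Asg -> Prop) -> Prop) (c : (Asg -> Prop) -> Asg) : Prop :=
  forall X, HX X -> X (c X).

Definition img (HX : (Asg -> Prop) -> Prop) (c : (Asg -> Prop) -> Asg) : Asg -> Prop :=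
  fun chi => exists X, HX X /\ chi = c X.

Definition dual (HX : (Asg -> Prop) -> Prop) : (Asg -> Prop) -> Prop :=
  fun Y => exists c, choice_fun HX c /\ Y = img HX c.

Definition par (HX HX1 HX2 : (Asg -> Prop) -> Prop) : Prop :=
  forall X, (HX X <-> (HX1 X \/ HX2 X)) /\ ~ (HX1 X /\ HX2 X).

Definition nonempty (HX : (Asg -> Prop) -> Prop) : Prop := exists X, HX X.

(* functors over P: only the values on Asg(P) are relevant *)
Definition Fnc := Asg -> tval.

Definition approx_gt (P : AP -> Prop) (p : AP) (k : nat) (chi1 chi2 : Asg) : Prop :=
  (forall q, P q -> q <> p -> chi1 q = chi2 q) /\
  (forall t, t <= k -> val chi1 p t = val chi2 p t).

Definition approx_ge (P : AP -> Prop) (p : AP) (k : nat) (chi1 chi2 : Asg) : Prop :=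
  (forall q, P q -> q <> p -> chi1 q = chi2 q) /\
  (forall t, t < k -> val chi1 p t = val chi2 p t).

Definition behavioral (P : AP -> Prop) (p : AP) (F : Fnc) : Prop :=
  forall k chi1 chi2, inAsg P chi1 -> inAsg P chi2 ->
    approx_gt P p k chi1 chi2 -> F chi1 k = F chi2 k.

Definition strongly_behavioral (P : AP -> Prop) (p : AP) (F : Fnc) : Prop :=
  forall k chi1 chi2, inAsg P chi1 -> inAsg P chi2 ->
    approx_ge P p k chi1 chi2 -> F chi1 k = F chi2 k.

Record qspec := QSpec { PB : AP -> Prop; PS : AP -> Prop }.

Definition Fnc_sigma (s : qspec) (P : AP -> Prop) (F : Fnc) : Prop :=
  (forall p, PB s p -> P p -> behavioral P p F) /\
  (forall p, PS s p -> P p -> strongly_behavioral P p F).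

Definition ext_set (X : Asg -> Prop) (F : Fnc) (p : AP) : Asg -> Prop :=
  fun chi' => exists chi, X chi /\ chi' = upd chi p (F chi).

Definition ext_sigma (s : qspec) (HX : (Asg -> Prop) -> Prop) (p : AP)
  : (Asg -> Prop) -> Prop :=
  fun Y => exists X F P, HX X /\ isHAsg P HX /\ Fnc_sigma s P F /\ Y = ext_set X F p.

Inductive ltl : Type :=
  | LTrue | LFalse
  | LAtom (p : AP)
  | LNot (f : ltl)
  | LAnd (f g : ltl)
  | LOr (f g : ltl)
  | LNext (f : ltl)
  | LUntil (f g : ltl)
  | LRelease (f g : ltl)
  | LEventually (f : ltl)
  | LGlobally (f : ltl).

Fixpoint ltl_sat (w : nat -> AP -> bool) (i : nat) (f : ltl) : Prop :=
  match f with
  | LTrue => True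
  | LFalse => False
  | LAtom p => w i p = true
  | LNot f => ~ ltl_sat w i f
  | LAnd f g => ltl_sat w i f /\ ltl_sat w i g
  | LOr f g => ltl_sat w i f \/ ltl_sat w i g
  | LNext f => ltl_sat w (S i) f
  | LUntil f g => exists j, i <= j /\ ltl_sat w j g /\ (forall k, i <= k < j -> ltl_sat w k f)
  | LRelease f g => forall j, i <= j -> ltl_sat w j g \/ (exists k, i <= k < j /\ ltl_sat w k f)
  | LEventually f => exists j, i <= j /\ ltl_sat w j f
  | LGlobally f => forall j, i <= j -> ltl_sat w j f
  end.

Definition asg_word (chi : Asg) : nat -> AP -> bool := fun t q => val chi q t.

Definition ltl_models (chi : Asg) (f : ltl) : Prop := ltl_sat (asg_word chi) 0 f.

Fixpoint ltl_props (f : ltl) (q : AP) : Prop :=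
  match f with
  | LTrue | LFalse => False
  | LAtom p => q = p
  | LNot f | LNext f | LEventually f | LGlobally f => ltl_props f q
  | LAnd f g | LOr f g | LUntil f g | LRelease f g => ltl_props f q \/ ltl_props g q
  end.

Inductive gfg : Type :=
  | GLtl (psi : ltl)
  | GNot (f : gfg)
  | GAnd (f g : gfg)
  | GOr (f g : gfg)
  | GEx (p : AP) (s : qspec) (f : gfg)
  | GAll (p : AP) (s : qspec) (f : gfg).

Fixpoint free (f : gfg) (q : AP) : Prop :=
  match f with
  | GLtl psi => ltl_props psi q
  | GNot f => free f q
  | GAnd f g | GOr f g => free f q \/ free g q
  | GEx p _ f | GAll p _ f => free f q /\ q <> p
  end.

Inductive flag := EA | AE.

Definition flip (a : flag) : flag := match a with EA => AE | AE => EA end.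

Fixpoint sat (f : gfg) (a : flag) (HX : (Asg -> Prop) -> Prop) : Prop :=
  match f with
  | GLtl psi =>
      match a with
      | EA => exists X, HX X /\ forall chi, X chi -> ltl_models chi psi
      | AE => forall X, HX X -> exists chi, X chi /\ ltl_models chi psi
      end
  | GNot f => ~ sat f (flip a) HX
  | GAnd f1 f2 =>
      let conjEA := fun HY => forall HY1 HY2, par HY HY1 HY2 ->
          (nonempty HY1 /\ sat f1 EA HY1) \/ (nonempty HY2 /\ sat f2 EA HY2) in
      match a with EA => conjEA HX | AE => conjEA (dual HX) end
  | GOr f1 f2 =>
      let disjAE := fun HY => exists HY1 HY2, par HY HY1 HY2 /\
          (nonempty HY1 -> sat f1 AE HY1) /\ (nonempty HY2 -> sat f2 AE HY2) in
      match a with AE => disjAE HX | EA => disjAE (dual HX) end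
  | GEx p s f =>
      match a with
      | EA => sat f EA (ext_sigma s HX p)
      | AE => sat f EA (ext_sigma s (dual HX) p)
      end
  | GAll p s f =>
      match a with
      | AE => sat f AE (ext_sigma s HX p)
      | EA => sat f AE (ext_sigma s (dual HX) p)
      end
  end.

End GFG.

From Stdlib Require Import Classical ClassicalEpsilon.

(* Call a hyperassignment well-formed if it lies in HAsg(P) for some P.
   The theorem is proved by structural induction on the formula, for all
   pairs of well-formed hyperassignments HX1 ⊑ HX2 simultaneously for both
   flags, since negation swaps the flags.  The inductive steps rest on
   three facts about refinement:
   - duality reverses it:   HX1 ⊑ HX2 implies dual HX2 ⊑ dual HX1;
   - extension preserves it: HX1 ⊑ HX2 implies ext_σ(HX1,p) ⊑ ext_σ(HX2,p)
     (the two hyperassignments have the same propositions, so they admit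
     the same σ-functors);
   - partitions pull back: a partition (Y1,Y2) of HX2 induces a partition
     (X1,X2) of HX1 with X1 ⊑ Y1 and X2 ⊑ Y2.
   Together with the stability of well-formedness under duals, extensions
   and non-empty sub-families, these carry the induction through every
   connective.  The stated theorem is the special case in which the
   propositions of both hyperassignments include the free ones of φ. *)

Section Monotonicity.
Local Set Implicit Arguments.
Variable AP : Type.
Local Notation hasg := ((Asg AP -> Prop) -> Prop).

Definition wf (HX : hasg) : Prop := exists P, isHAsg P HX.

Lemma choice_on (B : Type) (HX : hasg) (R : (Asg AP -> Prop) -> B -> Prop) :
  inhabited B -> (forall X, HX X -> exists y, R X y) ->
  exists f, forall X, HX X -> R X (f X).
Proof.
  intros [b] Htot.
  apply (choice (fun X y => HX X -> R X y)). intro X.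
  destruct (classic (HX X)) as [HXX | HnX].
  - destruct (Htot X HXX) as [y Hy]. exists y. auto.
  - exists b. contradiction.
Qed.

Lemma wf_sub (HX HY : hasg) :
  wf HX -> (forall X, HY X -> HX X) -> nonempty HY -> wf HY.
Proof.
  intros [P [_ [Hne Hdom]]] Hsub HYne.
  exists P. split; [exact HYne | split; eauto].
Qed.

(* Every member of a hyperassignment is non-empty, so its dual is one too. *)
Lemma wf_dual (HX : hasg) : wf HX -> wf (dual HX).
Proof.
  intros [P [[X0 HX0] [Hne Hdom]]]. exists P.
  destruct (choice_on HX (fun X chi => X chi) (inhabits (fun _ => None)) Hne)
    as [c0 Hc0].
  split; [| split].
  - exists (img HX c0). exists c0. split; [exact Hc0 | reflexivity].
  - intros Y [c [_ ->]]. exists (c X0). exists X0. split; [exact HX0 | reflexivity].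
  - intros Y chi [c [Hc ->]] [X [HXX ->]]. exact (Hdom X (c X) HXX (Hc X HXX)).
Qed.

Lemma wf_ext (s : qspec AP) (HX : hasg) (p : AP) : wf HX -> wf (ext_sigma s HX p).
Proof.
  intros [P HP]. pose proof HP as [[X0 HX0] [Hne Hdom]].
  set (F0 := fun (_ : Asg AP) (_ : nat) => false).
  assert (HF0 : Fnc_sigma s P F0).
  { split; intros q _ _ k chi1 chi2 _ _ _; reflexivity. }
  exists (fun q => P q \/ q = p). split; [| split].
  - exists (ext_set X0 F0 p). exists X0, F0, P. auto.
  - intros Y [X [F [Q [HXX [_ [_ ->]]]]]].
    destruct (Hne X HXX) as [chi Hchi].
    exists (upd chi p (F chi)). exists chi. auto.
  - intros Y chi' [X [F [Q [HXX [_ [_ ->]]]]]] [chi [Hchi ->]] q.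
    specialize (Hdom X chi HXX Hchi q). unfold upd.
    destruct (excluded_middle_informative (q = p)).
    + split; [auto | discriminate].
    + tauto.
Qed.

Lemma refine_nonempty (HX HY : hasg) : hrefine HX HY -> nonempty HX -> nonempty HY.
Proof. intros Hr [X HXX]. destruct (Hr X HXX) as [Y [HYY _]]. exists Y. exact HYY. Qed.

(* Duality reverses refinement: a choice function for HX2, composed with a
   choice of refining member for each member of HX1, is one for HX1. *)
Lemma refine_dual (HX1 HX2 : hasg) : hrefine HX1 HX2 -> hrefine (dual HX2) (dual HX1).
Proof.
  intros Hr Y [c2 [Hc2 ->]].
  destruct (choice_on HX1 (fun X1 X2 => HX2 X2 /\ forall chi, X2 chi -> X1 chi)
              (inhabits (fun _ => False)) Hr) as [e He].
  exists (img HX1 (fun X1 => c2 (e X1))). split.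
  - exists (fun X1 => c2 (e X1)). split; [| reflexivity].
    intros X1 H1. destruct (He X1 H1) as [H2 Hsub]. apply Hsub, Hc2, H2.
  - intros chi [X1 [H1 ->]]. exists (e X1). split; [apply He |]; auto.
Qed.

(* Extension preserves refinement: the refined family determines the same
   set of propositions, hence the same σ-functors are available. *)
Lemma refine_ext (s : qspec AP) (p : AP) (HX HY : hasg) :
  hrefine HX HY -> wf HY -> hrefine (ext_sigma s HX p) (ext_sigma s HY p).
Proof.
  intros Hr [Q HQ] Y [X [F [P [HXX [HP [HF ->]]]]]].
  pose proof HQ as [_ [HQne HQdom]].
  destruct (Hr X HXX) as [X' [HX' Hsub]].
  destruct (HQne X' HX') as [chi0 Hchi0].
  assert (HPQ : forall q, P q <-> Q q).
  { intro q. destruct HP as [_ [_ HPdom]].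
    rewrite <- (HPdom X chi0 HXX (Hsub _ Hchi0) q), <- (HQdom X' chi0 HX' Hchi0 q).
    tauto. }
  assert (HQP : isHAsg P HY).
  { destruct HQ as [HQ1 [HQ2 HQ3]]. split; [exact HQ1 | split; [exact HQ2 |]].
    intros X'' chi H1 H2 q. rewrite (HQ3 X'' chi H1 H2 q). symmetry. apply HPQ. }
  exists (ext_set X' F p). split.
  - exists X', F, P. auto.
  - intros chi' [chi [Hchi ->]]. exists chi. auto.
Qed.

(* A partition of HY pulls back along HX ⊑ HY: put into the first part
   the members of HX refined by a member of Y1, the rest into the second. *)
Lemma par_pullback (HX HY Y1 Y2 : hasg) :
  hrefine HX HY -> par HY Y1 Y2 ->
  exists X1 X2, par HX X1 X2 /\ hrefine X1 Y1 /\ hrefine X2 Y2.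
Proof.
  intros Hr Hp.
  set (covered := fun X => exists Y, Y1 Y /\ forall chi, Y chi -> X chi).
  exists (fun X => HX X /\ covered X), (fun X => HX X /\ ~ covered X).
  split; [| split].
  - intro X. destruct (classic (covered X)); tauto.
  - intros X [_ HXc]. exact HXc.
  - intros X [HXX HnX]. destruct (Hr X HXX) as [Y [HYY Hsub]].
    exists Y. split; [| exact Hsub].
    destruct (proj1 (proj1 (Hp Y)) HYY) as [HY1 | HY2]; [| exact HY2].
    exfalso. apply HnX. exists Y. auto.
Qed.

Lemma par_sub_l (HX X1 X2 : hasg) : par HX X1 X2 -> forall X, X1 X -> HX X.
Proof. intros Hp X H. apply (proj1 (Hp X)). auto. Qed.

Lemma par_sub_r (HX X1 X2 : hasg) : par HX X1 X2 -> forall X, X2 X -> HX X.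
Proof. intros Hp X H. apply (proj1 (Hp X)). auto. Qed.

Definition monotone (f : gfg AP) : Prop :=
  forall HX1 HX2 : hasg, wf HX1 -> wf HX2 -> hrefine HX1 HX2 ->
    (sat f EA HX1 -> sat f EA HX2) /\ (sat f AE HX2 -> sat f AE HX1).

Lemma monotone_parts (f : gfg AP) (HX HY X' Y' : hasg) :
  monotone f -> wf HX -> wf HY ->
  (forall X, X' X -> HX X) -> (forall Y, Y' Y -> HY Y) ->
  hrefine X' Y' -> nonempty X' ->
  (sat f EA X' -> sat f EA Y') /\ (sat f AE Y' -> sat f AE X').
Proof.
  intros Hf HXwf HYwf HsubX HsubY Hr Hne.
  apply Hf; [exact (wf_sub HXwf HsubX Hne)
            | exact (wf_sub HYwf HsubY (refine_nonempty Hr Hne))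
            | exact Hr].
Qed.

Definition conj_EA (f1 f2 : gfg AP) (HY : hasg) : Prop :=
  forall HY1 HY2, par HY HY1 HY2 ->
    (nonempty HY1 /\ sat f1 EA HY1) \/ (nonempty HY2 /\ sat f2 EA HY2).

Definition disj_AE (f1 f2 : gfg AP) (HY : hasg) : Prop :=
  exists HY1 HY2, par HY HY1 HY2 /\
    (nonempty HY1 -> sat f1 AE HY1) /\ (nonempty HY2 -> sat f2 AE HY2).

Lemma conj_EA_monotone (f1 f2 : gfg AP) (HX HY : hasg) :
  monotone f1 -> monotone f2 -> wf HX -> wf HY -> hrefine HX HY ->
  conj_EA f1 f2 HX -> conj_EA f1 f2 HY.
Proof.
  intros Hf1 Hf2 HXwf HYwf Hr Hsat Y1 Y2 HpY.
  destruct (par_pullback Hr HpY) as [X1 [X2 [HpX [Hr1 Hr2]]]].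
  destruct (Hsat X1 X2 HpX) as [[Hne Hs] | [Hne Hs]].
  - left. split; [exact (refine_nonempty Hr1 Hne) |].
    exact (proj1 (monotone_parts Hf1 HXwf HYwf (par_sub_l HpX) (par_sub_l HpY) Hr1 Hne) Hs).
  - right. split; [exact (refine_nonempty Hr2 Hne) |].
    exact (proj1 (monotone_parts Hf2 HXwf HYwf (par_sub_r HpX) (par_sub_r HpY) Hr2 Hne) Hs).
Qed.

Lemma disj_AE_antitone (f1 f2 : gfg AP) (HX HY : hasg) :
  monotone f1 -> monotone f2 -> wf HX -> wf HY -> hrefine HX HY ->
  disj_AE f1 f2 HY -> disj_AE f1 f2 HX.
Proof.
  intros Hf1 Hf2 HXwf HYwf Hr [Y1 [Y2 [HpY [Hs1 Hs2]]]].
  destruct (par_pullback Hr HpY) as [X1 [X2 [HpX [Hr1 Hr2]]]].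
  exists X1, X2. split; [exact HpX | split]; intro Hne.
  - apply (monotone_parts Hf1 HXwf HYwf (par_sub_l HpX) (par_sub_l HpY) Hr1 Hne).
    exact (Hs1 (refine_nonempty Hr1 Hne)).
  - apply (monotone_parts Hf2 HXwf HYwf (par_sub_r HpX) (par_sub_r HpY) Hr2 Hne).
    exact (Hs2 (refine_nonempty Hr2 Hne)).
Qed.

Lemma monotone_all (f : gfg AP) : monotone f.
Proof.
  induction f as [psi | f IH | f1 IH1 f2 IH2 | f1 IH1 f2 IH2 | p s f IH | p s f IH];
    intros HX1 HX2 Hwf1 Hwf2 Hr; simpl.
  - split.
    + intros [X [HXX Hm]]. destruct (Hr X HXX) as [Y [HYY Hsub]]. eauto.
    + intros Hs X HXX. destruct (Hr X HXX) as [Y [HYY Hsub]].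
      destruct (Hs Y HYY) as [chi [Hchi Hm]]. eauto.
  - destruct (IH HX1 HX2 Hwf1 Hwf2 Hr) as [HEA HAE]. split; tauto.
  - split; apply conj_EA_monotone; auto using wf_dual, refine_dual.
  - split; apply disj_AE_antitone; auto using wf_dual, refine_dual.
  - split; apply IH; auto using wf_ext, wf_dual, refine_ext, refine_dual.
  - split; apply IH; auto using wf_ext, wf_dual, refine_ext, refine_dual.
Qed.

End Monotonicity.

Theorem mainTheorem8 (AP : Type) (phi : gfg AP) (HX1 HX2 : (Asg AP -> Prop) -> Prop) :
  isHAsg_sup (free phi) HX1 -> isHAsg_sup (free phi) HX2 -> hrefine HX1 HX2 ->
  (sat phi EA HX1 -> sat phi EA HX2) /\ (sat phi AE HX2 -> sat phi AE HX1).
Proof.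
  intros [P1 [HP1 _]] [P2 [HP2 _]] Hr.
  apply monotone_all; [exists P1 | exists P2 | ]; assumption.
Qed.
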